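(* Let $A,B,C$ be real random variables on a common probability space with finite second moments, $\mathrm{Var}(B)>0$, $\mathbb{E}[A]\neq0$, $\mathbb{E}[C]\neq 0$, and set $R=\mathbb{E}[A]/\mathbb{E}[C]$. Let $n\ge1$ and let $(A_i,B_i,C_i)_{i=1,\dots,n}$ be i.i.d. copies of $(A,B,C)$. For $\alpha\in\mathbb{R}$ put $N_\alpha=\overline{A_n}+\alpha(\mathbb{E}[B]-\overline{B_n})$, and let $\alpha_o'=\frac{\mathrm{Cov}(A,B)-R\,\mathrm{Cov}(B,C)}{\mathrm{Var}(B)}$. Then $$\Phi(N_{\alpha_o'},\overline{C_n})-\Phi(\overline{A_n},\overline{C_n})=-\frac{1}{n\,\mathbb{E}[C]^2}\,\frac{\big(\mathrm{Cov}(A,B)-R\,\mathrm{Cov}(B,C)\big)^2}{\mathrm{Var}(B)}\le 0 .$$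
   Context: For a random variable $X$, $\overline{X_n}=\frac1n\sum_{i=1}^n X_i$ denotes the sample mean of the i.i.d. copies $X_1,\dots,X_n$. For real random variables $X,Z$ with finite second moments and $\mathbb{E}[Z]\neq0$, define the first-order (delta-method) approximation of the variance of the ratio $X/Z$: $$\Phi(X,Z)=\frac{\mathrm{Var}(X)}{\mathbb{E}[Z]^2}+\frac{\mathbb{E}[X]^2}{\mathbb{E}[Z]^4}\mathrm{Var}(Z)-2\frac{\mathbb{E}[X]}{\mathbb{E}[Z]^3}\mathrm{Cov}(X,Z).$$ $\Phi(N_\alpha,\overline{C_n})$ is the paper's variance of the CV/MC estimator $N_\alpha/\overline{C_n}$ of $R$, and $\Phi(\overline{A_n},\overline{C_n})$ that of the Monte Carlo ratio estimator $\overline{A_n}/\overline{C_n}$; $\mathbb{E}[B]$ is a known constant. *)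

From HB Require Import structures.
From mathcomp Require Import all_boot all_order all_algebra.
From mathcomp Require Import all_classical all_reals all_analysis.
Set Implicit Arguments. Unset Strict Implicit. Unset Printing Implicit Defensive.
Import Order.TTheory GRing.Theory Num.Theory.
Local Open Scope classical_set_scope.
Local Open Scope ring_scope.

Definition Ex {d} {T : measurableType d} {R : realType} (P : probability T R)
  (X : T -> R) : R := fine 'E_P[X].
Definition Var {d} {T : measurableType d} {R : realType} (P : probability T R)
  (X : T -> R) : R := fine (variance P X).
Definition Cov {d} {T : measurableType d} {R : realType} (P : probability T R)
  (X Y : T -> R) : R := fine (covariance P X Y).

(* First-order (delta-method) variance approximation of the ratio X/Z. *)
Definition Phi {d} {T : measurableType d} {R : realType} (P : probability T R)
  (X Z : T -> R) : R :=
  Var P X / Ex P Z ^+ 2 + Ex P X ^+ 2 / Ex P Z ^+ 4 * Var P Z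
  - 2 * (Ex P X / Ex P Z ^+ 3) * Cov P X Z.

Definition sample_mean {T} {R : realType} (n : nat) (X : 'I_n -> T -> R) : T -> R :=
  fun w => n%:R^-1 * \sum_(i < n) X i w.

Definition triple {T} {R : realType} (X Y Z : T -> R) : T -> (R * R * R)%type :=
  fun w => (X w, Y w, Z w).

Definition iid_copies {d} {T : measurableType d} {R : realType}
  (P : probability T R) (n : nat) (A B C : T -> R)
  (Ai Bi Ci : 'I_n -> T -> R) : Prop :=
  [/\ (forall i, measurable_fun setT (Ai i) /\ measurable_fun setT (Bi i)
                 /\ measurable_fun setT (Ci i)),
      (forall S : 'I_n -> set (R * R * R)%type, (forall i, measurable (S i)) ->
         P (\bigcap_i (triple (Ai i) (Bi i) (Ci i) @^-1` S i)) =
         (\prod_(i < n) P (triple (Ai i) (Bi i) (Ci i) @^-1` S i))%E) &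
      (forall (i : 'I_n) (S : set (R * R * R)%type), measurable S ->
         P (triple (Ai i) (Bi i) (Ci i) @^-1` S) = P (triple A B C @^-1` S))].

(* The control variate N_alpha has the same mean as the sample mean of A, and
   its variance and covariance with the sample mean of C differ from those of
   the sample mean of A by terms linear and quadratic in alpha; hence
   Phi (N_alpha, Cbar) - Phi (Abar, Cbar) is the quadratic
   (alpha^2 Var Bbar - 2 alpha (Cov (Abar, Bbar) - R Cov (Bbar, Cbar))) / E[C]^2.
   Each copy has the law of (A, B, C) and distinct copies are independent,
   hence uncorrelated, so every first moment of a sample mean is the
   population one and every second moment is the population one divided by n.
   The quadratic is minimised at alpha_o', with minimum
   -(Cov (A, B) - R Cov (B, C))^2 / (n Var B E[C]^2). *)

From HB Require Import structures.
From mathcomp Require Import all_boot all_order all_algebra.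
From mathcomp Require Import all_classical all_reals all_analysis.
From mathcomp Require Import measurable_realfun ring.
Set Implicit Arguments. Unset Strict Implicit. Unset Printing Implicit Defensive.
Import Order.TTheory GRing.Theory Num.Theory.
Local Open Scope classical_set_scope.
Local Open Scope ring_scope.

Section equal_law.
Local Open Scope ereal_scope.
Context d d' (T : measurableType d) (U : measurableType d') (R : realType).
Variables (P : probability T R) (W1 W2 : T -> U).
Hypotheses (mW1 : measurable_fun setT W1) (mW2 : measurable_fun setT W2).
Hypothesis W12 : forall S, measurable S -> P (W1 @^-1` S) = P (W2 @^-1` S).

Lemma ge0_integral_eq_law (g : U -> \bar R) :
  measurable_fun setT g -> (forall u, 0 <= g u) ->
  \int[P]_x g (W1 x) = \int[P]_x g (W2 x).
Proof.
move=> mg g0.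
have := ge0_integral_pushforward mW1 P measurableT mg (fun u _ => g0 u).
have := ge0_integral_pushforward mW2 P measurableT mg (fun u _ => g0 u).
rewrite !preimage_setT => <- <-.
by apply: eq_measure_integral => S mS _; exact: W12.
Qed.

Lemma integrable_eq_law (g : U -> \bar R) : measurable_fun setT g ->
  P.-integrable setT (g \o W2) -> P.-integrable setT (g \o W1).
Proof.
move=> mg /integrableP[_ g2]; apply/integrableP; split.
  exact: measurableT_comp.
rewrite (@ge0_integral_eq_law (abse \o g)) //; first exact: measurableT_comp.
by move=> u; exact: abse_ge0.
Qed.

Lemma integral_eq_law (g : U -> \bar R) : measurable_fun setT g ->
  P.-integrable setT (g \o W2) -> \int[P]_x g (W1 x) = \int[P]_x g (W2 x).
Proof.
move=> mg g2; have g1 := integrable_eq_law mg g2.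
have := integral_pushforward mW1 mg g1 measurableT.
have := integral_pushforward mW2 mg g2 measurableT.
rewrite !preimage_setT => <- <-.
by apply: eq_measure_integral => S mS _; exact: W12.
Qed.

Lemma Lfun2_eq_law (s : U -> R) : measurable_fun setT s ->
  s \o W2 \in Lfun P 2%:E -> s \o W1 \in Lfun P 2%:E.
Proof.
move=> ms; rewrite !inE => /andP[_ s2].
apply/andP; split; first by rewrite inE; exact: measurableT_comp ms mW1.
move: s2; rewrite !inE /= /finite_norm unlock /=.
rewrite (@ge0_integral_eq_law (fun u => `|(s u)%:E| `^ 2)) // => [|u].
  apply: measurableT_comp (measurable_poweR 2) _.
  by apply: measurableT_comp => //; exact/measurable_EFinP.
exact: poweR_ge0.
Qed.

Lemma expectation_eq_law (s : U -> R) : measurable_fun setT s ->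
  s \o W2 \in Lfun P 1 -> 'E_P[s \o W1] = 'E_P[s \o W2].
Proof.
move=> ms /Lfun1_integrable s2; rewrite unlock.
by apply: (@integral_eq_law (EFin \o s)) => //; exact/measurable_EFinP.
Qed.

End equal_law.

Section real_moments.
Context d (T : measurableType d) (R : realType) (P : probability T R).
Local Notation L2 := (Lfun P 2%:E).
Implicit Types (X Y Z : T -> R) (a : R).

Lemma Lfun2_Lfun1 X : X \in L2 -> X \in Lfun P 1.
Proof. exact: (Lfun_subset12 (fin_num_measure P _ measurableT)). Qed.

Lemma Lfun2D X Y : X \in L2 -> Y \in L2 -> X + Y \in L2.
Proof.
have two_ge1 : (1 <= 2%:E :> \bar R)%E by rewrite lee_fin ler1n.
exact: (Lfun_addr_closed P two_ge1).2.
Qed.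

Lemma Lfun2Z a X : X \in L2 -> a \o* X \in L2.
Proof. by apply: Lfun_scale; rewrite ler1n. Qed.

Lemma Lfun2_sum (I : Type) (r : seq I) (F : I -> T -> R) :
  (forall i, F i \in L2) -> \sum_(i <- r) F i \in L2.
Proof.
move=> F2; apply: (big_ind (fun X => X \in L2)) => //.
  exact: Lfun_cst.
exact: Lfun2D.
Qed.

Lemma fin_num_expectation2 X : X \in L2 -> ('E_P[X])%E \is a fin_num.
Proof. by move=> X2; apply/expectation_fin_num/Lfun2_Lfun1. Qed.

Lemma fin_num_covariance2 X Y : X \in L2 -> Y \in L2 ->
  covariance P X Y \is a fin_num.
Proof.
move=> X2 Y2.
by apply: covariance_fin_num;
  [exact: Lfun2_Lfun1|exact: Lfun2_Lfun1|exact: Lfun2_mul_Lfun1].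
Qed.

Lemma Ex_cst a : Ex P (cst a) = a.
Proof. by rewrite /Ex expectation_cst. Qed.

Lemma ExD X Y : X \in L2 -> Y \in L2 -> Ex P (X + Y) = Ex P X + Ex P Y.
Proof.
move=> X2 Y2.
by rewrite /Ex expectationD ?Lfun2_Lfun1 // fineD ?fin_num_expectation2.
Qed.

Lemma ExZ a X : X \in L2 -> Ex P (a \o* X) = a * Ex P X.
Proof.
by move=> X2; rewrite /Ex expectationZl ?Lfun2_Lfun1 // fineM ?fin_num_expectation2.
Qed.

Lemma Ex_sum (I : Type) (r : seq I) (F : I -> T -> R) :
  (forall i, F i \in L2) -> Ex P (\sum_(i <- r) F i) = \sum_(i <- r) Ex P (F i).
Proof.
move=> F2; elim: r => [|i r IHr]; first by rewrite !big_nil -[0]/(cst 0) Ex_cst.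
by rewrite !big_cons ExD ?Lfun2_sum // IHr.
Qed.

Lemma covariance2E X Y : X \in L2 -> Y \in L2 ->
  covariance P X Y = ('E_P[X * Y] - 'E_P[X] * 'E_P[Y])%E.
Proof.
by move=> X2 Y2; apply: covarianceE; rewrite ?Lfun2_mul_Lfun1 // Lfun2_Lfun1.
Qed.

Lemma CovC X Y : Cov P X Y = Cov P Y X.
Proof. by rewrite /Cov covarianceC. Qed.

Lemma Cov_cst_l a X : Cov P (cst a) X = 0.
Proof. by rewrite /Cov covariance_cst_l. Qed.

Lemma CovDl X Y Z : X \in L2 -> Y \in L2 -> Z \in L2 ->
  Cov P (X + Y) Z = Cov P X Z + Cov P Y Z.
Proof.
by move=> X2 Y2 Z2; rewrite /Cov covarianceDl // fineD ?fin_num_covariance2.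
Qed.

Lemma CovZl a X Y : X \in L2 -> Y \in L2 -> Cov P (a \o* X) Y = a * Cov P X Y.
Proof.
move=> X2 Y2; rewrite /Cov covarianceZl;
  [|exact: Lfun2_Lfun1|exact: Lfun2_Lfun1|exact: Lfun2_mul_Lfun1].
by rewrite fineM // fin_num_covariance2.
Qed.

Lemma Cov_suml (I : Type) (r : seq I) (F : I -> T -> R) Y :
  (forall i, F i \in L2) -> Y \in L2 ->
  Cov P (\sum_(i <- r) F i) Y = \sum_(i <- r) Cov P (F i) Y.
Proof.
move=> F2 Y2; elim: r => [|i r IHr]; first by rewrite !big_nil -[0]/(cst 0) Cov_cst_l.
by rewrite !big_cons CovDl ?Lfun2_sum // IHr.
Qed.

End real_moments.

Lemma expectation_distribution d (T : measurableType d) (R : realType)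
    (P : probability T R) (X : T -> R) (mX : X \in mfun) :
  X \in Lfun P 1 -> ('E_P[X] = \int[distribution P (mfun_Sub mX)]_x x%:E)%E.
Proof.
move=> /Lfun1_integrable X1.
by rewrite integral_distribution // unlock.
Qed.

Lemma integrable_distribution d (T : measurableType d) (R : realType)
    (P : probability T R) (X : T -> R) (mX : X \in mfun) :
  X \in Lfun P 1 -> (distribution P (mfun_Sub mX)).-integrable setT EFin.
Proof.
move=> X1; apply: (integrable_pushforward (measurable_funP _)) => //.
exact/Lfun1_integrable.
Qed.

Section expectation_indep.
Local Open Scope ereal_scope.
Context d (T : measurableType d) (R : realType) (P : probability T R).
Variables (X Y : T -> R).
Hypotheses (X2 : X \in Lfun P 2%:E) (Y2 : Y \in Lfun P 2%:E).
Hypothesis XY_indep : forall S1 S2 : set R, measurable S1 -> measurable S2 ->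
  P (X @^-1` S1 `&` Y @^-1` S2) = P (X @^-1` S1) * P (Y @^-1` S2).

Let mX : X \in mfun := sub_Lfun_mfun X2.
Let mY : Y \in mfun := sub_Lfun_mfun Y2.
Let mXY : (fun x => (X x, Y x)) \in mfun.
Proof. by rewrite inE; apply: measurable_fun_pair; rewrite -inE. Qed.
Let lawX := distribution P (mfun_Sub mX).
Let lawY := distribution P (mfun_Sub mY).
Let lawXY := distribution P (mfun_Sub mXY).

Lemma distribution_pair_indep S : measurable S -> (lawX \x lawY) S = lawXY S.
Proof. by apply: product_measure_unique => A B mA mB; exact: XY_indep. Qed.

Lemma expectation_indepM : 'E_P[X \* Y] = 'E_P[X] * 'E_P[Y].
Proof.
have [X1 Y1] := (Lfun2_Lfun1 X2, Lfun2_Lfun1 Y2).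
pose f (z : R * R) := (z.1 * z.2)%:E.
have mf : measurable_fun setT f.
  apply/measurable_EFinP.
  by apply: measurable_funM; [exact: measurable_fst|exact: measurable_snd].
have XY1 : P.-integrable setT (f \o mfun_Sub mXY).
  exact/Lfun1_integrable/Lfun2_mul_Lfun1.
have lawXYE : \int[lawXY]_z f z = \int[lawX \x lawY]_z f z.
  by apply: eq_measure_integral => S mS _; exact/esym/distribution_pair_indep.
have f_int : (lawX \x lawY).-integrable setT f.
  apply/integrableP; split => //; rewrite (eq_measure_integral lawXY).
    have := integrable_pushforward (measurable_funP _) mf XY1 measurableT.
    by case/integrableP.
  by move=> S mS _; exact: distribution_pair_indep.
have -> : 'E_P[X \* Y] = \int[lawX \x lawY]_z f z.
  by rewrite -lawXYE integral_distribution // unlock.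
rewrite -(integral12_prod_meas1 f_int) (expectation_distribution mX X1).
have Y_int := integrable_distribution mY Y1.
rewrite (expectation_distribution mY Y1) -(fineK (integrable_fin_num _ Y_int)) //.
rewrite -integralZr //; last exact: integrable_distribution.
apply: eq_integral => x _; rewrite /fubini_F /f /=.
by under eq_integral do rewrite EFinM; rewrite integralZl // fineK // integrable_fin_num.
Qed.

End expectation_indep.

Section control_variate.
Context d (T : measurableType d) (R : realType) (P : probability T R).
Local Notation L2 := (Lfun P 2%:E).
Variables (X Y Z : T -> R).
Hypotheses (X2 : X \in L2) (Y2 : Y \in L2) (Z2 : Z \in L2).

Lemma Phi_control_variate (al : R) : Ex P Z != 0 ->
  Phi P (fun w => X w + al * (Ex P Y - Y w)) Z - Phi P X Z =
  (al ^+ 2 * Var P Y - 2 * al * (Cov P X Y - Ex P X / Ex P Z * Cov P Y Z))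
  / Ex P Z ^+ 2.
Proof.
move=> EZ_neq0.
set N := fun w => _.
have NE : N = X + cst (al * Ex P Y) + (- al) \o* Y.
  by apply/funext => w; rewrite /N !addrfctE /=; ring.
have cst2 : cst (al * Ex P Y) \in L2 := Lfun_cst _ _ _.
have N2 : N \in L2 by rewrite NE Lfun2D ?Lfun2Z ?Lfun2D.
have CovN V : V \in L2 -> Cov P N V = Cov P X V - al * Cov P Y V.
  move=> V2; rewrite NE CovDl ?CovDl ?Cov_cst_l ?CovZl ?Lfun2D ?Lfun2Z ?Lfun_cst //.
  by rewrite addr0 mulNr.
have ExN : Ex P N = Ex P X.
  rewrite NE ExD ?ExD ?Ex_cst ?ExZ ?Lfun2D ?Lfun2Z ?Lfun_cst //.
  by rewrite mulNr addrK.
have VarN : Var P N = Var P X + al ^+ 2 * Var P Y - 2 * al * Cov P X Y.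
  rewrite [LHS](CovN _ N2) CovC CovN // [Cov P Y N]CovC CovN // [Cov P Y X]CovC.
  by rewrite /Var -/(Cov P X X) -/(Cov P Y Y); ring.
rewrite /Phi ExN VarN CovN //; field; exact: EZ_neq0.
Qed.

End control_variate.

Lemma sample_meanE (T : Type) (R : realType) (n : nat) (X : 'I_n -> T -> R) :
  sample_mean X = n%:R^-1 \o* \sum_(i < n) X i.
Proof. by rewrite fct_sumE; apply/funext => w; rewrite /sample_mean /= mulrC. Qed.

Definition iid_family d d' (T : measurableType d) (U : measurableType d')
    (R : realType) (P : probability T R) (n : nat) (W0 : T -> U)
    (W : 'I_n -> T -> U) : Prop :=
  [/\ measurable_fun setT W0, forall i, measurable_fun setT (W i),
      forall S : 'I_n -> set U, (forall i, measurable (S i)) ->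
        P (\bigcap_i (W i @^-1` S i)) = (\prod_(i < n) P (W i @^-1` S i))%E &
      forall i S, measurable S -> P (W i @^-1` S) = P (W0 @^-1` S)].

Section iid_family_moments.
Context d d' (T : measurableType d) (U : measurableType d') (R : realType).
Variables (P : probability T R) (n : nat) (W0 : T -> U) (W : 'I_n -> T -> U).
Hypothesis iidW : iid_family P W0 W.
Local Notation L2 := (Lfun P 2%:E).
Local Notation mean s := (sample_mean (fun i => s \o W i)).
Implicit Types s : U -> R.

Let mW0 : measurable_fun setT W0. Proof. by case: iidW. Qed.
Let mW i : measurable_fun setT (W i). Proof. by case: iidW. Qed.
Let W_law i S : measurable S -> P (W i @^-1` S) = P (W0 @^-1` S).
Proof. by case: iidW => _ _ _; exact. Qed.

Lemma iid_family_indep2 i j S1 S2 : i != j -> measurable S1 -> measurable S2 ->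
  P (W i @^-1` S1 `&` W j @^-1` S2) = (P (W i @^-1` S1) * P (W j @^-1` S2))%E.
Proof.
move=> ij mS1 mS2; case: iidW => _ _ W_indep _.
pose S k := if k == i then S1 else if k == j then S2 else setT.
have mS k : measurable (S k) by rewrite /S; case: eqP => // _; case: eqP.
have := W_indep S mS; rewrite (bigD1 i) //= (bigD1 j) 1?eq_sym //=.
rewrite big1 => [|k /andP[/negbTE ki /negbTE kj]]; last first.
  by rewrite /S ki kj preimage_setT probability_setT.
rewrite /S eqxx eq_sym (negbTE ij) eqxx mule1 => <-; congr (P _).
apply/seteqP; split => [x [Si Sj] k _|x Sk].
  by case: eqP => [->//|_]; case: eqP => [->|].
by split; [have := Sk i I|have := Sk j I]; rewrite eqxx // eq_sym (negbTE ij).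
Qed.

Lemma Lfun2_iid_comp s i : measurable_fun setT s ->
  s \o W0 \in L2 -> s \o W i \in L2.
Proof. exact: Lfun2_eq_law (mW i) mW0 (W_law i) s. Qed.

Lemma Ex_iid_comp s i : measurable_fun setT s -> s \o W0 \in L2 ->
  Ex P (s \o W i) = Ex P (s \o W0).
Proof.
move=> ms s2.
by rewrite /Ex (expectation_eq_law (mW i) mW0 (W_law i)) // Lfun2_Lfun1.
Qed.

Lemma Cov_iid_comp s s' i j : measurable_fun setT s -> measurable_fun setT s' ->
  s \o W0 \in L2 -> s' \o W0 \in L2 ->
  Cov P (s \o W i) (s' \o W j) = if i == j then Cov P (s \o W0) (s' \o W0) else 0.
Proof.
move=> ms ms' s2 s'2; have si2 := Lfun2_iid_comp i ms s2.
have s'j2 := Lfun2_iid_comp j ms' s'2.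
rewrite /Cov !covariance2E //.
case: eqVneq => [<-|ij].
  have mss' : measurable_fun setT (fun u => s u * s' u) by exact: measurable_funM.
  rewrite (expectation_eq_law (mW i) mW0 (W_law i) mss') ?Lfun2_mul_Lfun1 //.
  have EW := expectation_eq_law (mW i) mW0 (W_law i).
  by rewrite (EW _ ms) ?(EW _ ms') ?Lfun2_Lfun1.
rewrite expectation_indepM ?subee ?fin_numM ?fin_num_expectation2 // => S1 S2 mS1 mS2.
have msS1 : measurable (s @^-1` S1) by rewrite -[X in measurable X]setTI; exact: ms.
have ms'S2 : measurable (s' @^-1` S2) by rewrite -[X in measurable X]setTI; exact: ms'.
exact: iid_family_indep2 ij msS1 ms'S2.
Qed.

Lemma Lfun2_sample_mean s : measurable_fun setT s -> s \o W0 \in L2 ->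
  mean s \in L2.
Proof.
move=> ms s2; rewrite sample_meanE Lfun2Z // Lfun2_sum // => i.
exact: Lfun2_iid_comp.
Qed.

Lemma Ex_sample_mean s : (0 < n)%N -> measurable_fun setT s -> s \o W0 \in L2 ->
  Ex P (mean s) = Ex P (s \o W0).
Proof.
move=> n_gt0 ms s2; have si2 i := Lfun2_iid_comp i ms s2.
rewrite sample_meanE ExZ ?Lfun2_sum // Ex_sum //.
under eq_bigr do rewrite Ex_iid_comp //.
by rewrite sumr_const card_ord -[Ex P _ *+ n]mulr_natl mulKf // pnatr_eq0 -lt0n.
Qed.

Lemma Cov_sample_mean s s' : measurable_fun setT s -> measurable_fun setT s' ->
  s \o W0 \in L2 -> s' \o W0 \in L2 ->
  Cov P (mean s) (mean s') = n%:R^-1 * Cov P (s \o W0) (s' \o W0).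
Proof.
move=> ms ms' s2 s'2; have si2 i := Lfun2_iid_comp i ms s2.
have s'i2 i := Lfun2_iid_comp i ms' s'2.
have Cov_row i :
    Cov P (s \o W i) (\sum_(j < n) (s' \o W j)) = Cov P (s \o W0) (s' \o W0).
  rewrite CovC Cov_suml // (bigD1 i) //= big1 => [|j /negbTE ji].
    by rewrite CovC Cov_iid_comp // eqxx addr0.
  by rewrite CovC Cov_iid_comp // eq_sym ji.
rewrite !sample_meanE CovZl ?Lfun2Z ?Lfun2_sum // CovC CovZl ?Lfun2_sum // CovC.
rewrite Cov_suml ?Lfun2_sum //.
under eq_bigr do rewrite Cov_row.
rewrite sumr_const card_ord -[Cov P _ _ *+ n]mulr_natl.
have [->|n_neq0] := eqVneq (n%:R : R) 0; first by rewrite invr0 !mul0r.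
by rewrite mulKf.
Qed.

Lemma Phi_sample_mean_control_variate a b c al : (0 < n)%N ->
  measurable_fun setT a -> measurable_fun setT b -> measurable_fun setT c ->
  a \o W0 \in L2 -> b \o W0 \in L2 -> c \o W0 \in L2 -> Ex P (c \o W0) != 0 ->
  Phi P (fun w => mean a w + al * (Ex P (b \o W0) - mean b w)) (mean c)
    - Phi P (mean a) (mean c) =
  n%:R^-1 * (al ^+ 2 * Var P (b \o W0) - 2 * al * (Cov P (a \o W0) (b \o W0)
    - Ex P (a \o W0) / Ex P (c \o W0) * Cov P (b \o W0) (c \o W0)))
  / Ex P (c \o W0) ^+ 2.
Proof.
move=> n_gt0 ma mb mc a2 b2 c2 Ec_neq0.
have Var_mean : Var P (mean b) = n%:R^-1 * Var P (b \o W0) :=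
  Cov_sample_mean mb mb b2 b2.
rewrite -(Ex_sample_mean n_gt0 mb b2) Phi_control_variate ?Lfun2_sample_mean //;
  last by rewrite Ex_sample_mean.
rewrite !Ex_sample_mean // Var_mean !Cov_sample_mean //.
by field; rewrite Ec_neq0 pnatr_eq0 -lt0n n_gt0.
Qed.

End iid_family_moments.

Lemma measurable_triple d (T : measurableType d) (R : realType) (X Y Z : T -> R) :
  measurable_fun setT X -> measurable_fun setT Y -> measurable_fun setT Z ->
  measurable_fun setT (triple X Y Z).
Proof.
by move=> mX mY mZ; exact: measurable_fun_pair (measurable_fun_pair mX mY) mZ.
Qed.

Lemma iid_copies_family d (T : measurableType d) (R : realType)
    (P : probability T R) (A B C : T -> R) (n : nat) (Ai Bi Ci : 'I_n -> T -> R) :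
  measurable_fun setT A -> measurable_fun setT B -> measurable_fun setT C ->
  iid_copies P A B C Ai Bi Ci ->
  iid_family P (triple A B C) (fun i => triple (Ai i) (Bi i) (Ci i)).
Proof.
move=> mA mB mC [mABCi ABC_indep ABC_law].
split => //; first exact: measurable_triple.
by move=> i; have [? [? ?]] := mABCi i; exact: measurable_triple.
Qed.

Theorem mainTheorem4 (d : measure_display) (T : measurableType d) (R : realType)
  (P : probability T R) (A B C : T -> R) (n : nat)
  (Ai Bi Ci : 'I_n -> T -> R) :
  A \in Lfun P 2%:E -> B \in Lfun P 2%:E -> C \in Lfun P 2%:E ->
  0 < Var P B -> Ex P A != 0 -> Ex P C != 0 ->
  (1 <= n)%N ->
  iid_copies P A B C Ai Bi Ci ->
  let Rr := Ex P A / Ex P C in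
  let Abar := sample_mean Ai in
  let Bbar := sample_mean Bi in
  let Cbar := sample_mean Ci in
  let N := fun alpha : R => (fun w => Abar w + alpha * (Ex P B - Bbar w)) in
  let alpha_o := (Cov P A B - Rr * Cov P B C) / Var P B in
  Phi P (N alpha_o) Cbar - Phi P Abar Cbar =
    - ((n%:R * Ex P C ^+ 2)^-1 * ((Cov P A B - Rr * Cov P B C) ^+ 2 / Var P B))
  /\ Phi P (N alpha_o) Cbar - Phi P Abar Cbar <= 0.
Proof.
move=> A2 B2 C2 VarB_gt0 _ EC_neq0 n_gt0 ABC_iid Rr Abar Bbar Cbar N alpha_o.
have Lfun2_measurable X : X \in Lfun P 2%:E -> measurable_fun setT X.
  by move=> /sub_Lfun_mfun; rewrite inE.
have iidW := iid_copies_family (Lfun2_measurable _ A2) (Lfun2_measurable _ B2)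
  (Lfun2_measurable _ C2) ABC_iid.
have ma : measurable_fun setT (fst \o fst : R * R * R -> R).
  exact: measurableT_comp measurable_fst measurable_fst.
have mb : measurable_fun setT (snd \o fst : R * R * R -> R).
  exact: measurableT_comp measurable_snd measurable_fst.
have PhiE : Phi P (N alpha_o) Cbar - Phi P Abar Cbar =
    n%:R^-1 * (alpha_o ^+ 2 * Var P B - 2 * alpha_o * (Cov P A B - Rr * Cov P B C))
    / Ex P C ^+ 2.
  (* The coordinates of [triple (Ai i) (Bi i) (Ci i)] reduce to [Ai i], [Bi i]
     and [Ci i], so the lemma's sample means are Abar, Bbar, Cbar up to
     conversion. *)
  exact (Phi_sample_mean_control_variate iidW alpha_o n_gt0 ma mb measurable_snd
           A2 B2 C2 EC_neq0).
have diffE : Phi P (N alpha_o) Cbar - Phi P Abar Cbar =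
    - ((n%:R * Ex P C ^+ 2)^-1 * ((Cov P A B - Rr * Cov P B C) ^+ 2 / Var P B)).
  by rewrite PhiE /alpha_o; field; rewrite EC_neq0 gt_eqF // pnatr_eq0 -lt0n n_gt0.
split=> //; rewrite diffE oppr_le0 mulr_ge0 //.
  by rewrite invr_ge0 mulr_ge0 ?sqr_ge0.
by rewrite divr_ge0 ?sqr_ge0 ?ltW.
Qed.
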